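(* Let $K$ be a perfect field, $k\subset K$ a subfield, $\lambda\in\operatorname{Emb}(K)$ with $|\lambda^G|=n<\infty$, and let $K^n_\phi$ be the simple two-sided vector space corresponding to $\lambda$. Let $\phi^T:K\to M_n(K)$ be $x\mapsto\phi(x)^T$. Then $K^n_{\phi^T}\cong K^n_\phi$ as two-sided vector spaces.
   Context: Let $\overline{K}$ be a fixed algebraic closure of $K$. A two-sided vector space is a $K\otimes_k K$-module. $\operatorname{Emb}(K)$ is the set of $k$-linear field embeddings $K\to\overline{K}$; $G=\operatorname{Aut}(\overline{K}/K)$ acts by left composition, with orbits $\lambda^G$. $K(\lambda)$ is the composite of $K$ and $\lambda(K)$ in $\overline{K}$. For a homomorphism $\phi:K\to M_n(K)$, $K^n_\phi$ denotes the row vectors $K^n$ with left action by scalar multiplication and right action $v\cdot x=v\phi(x)$. The simple two-sided vector space corresponding to $\lambda$ is $K^n_\phi$ with $\phi$ defined as follows: $\alpha_1,\dots,\alpha_n$ is a basis of $K(\lambda)$ over $K$, $\lambda_i:K\to K$ are defined by $\lambda(x)=\sum_i\lambda_i(x)\alpha_i$, $\beta_{ijk}\in K$ by $\alpha_i\alpha_j=\sum_k\beta_{ijk}\alpha_k$, and $\phi_{ij}(x)=\sum_k\beta_{jki}\lambda_k(x)$. *)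

From HB Require Import structures.
From mathcomp Require Import all_boot all_order all_algebra.
Set Implicit Arguments. Unset Strict Implicit. Unset Printing Implicit Defensive.
Import Order.TTheory GRing.Theory Num.Theory.
Local Open Scope ring_scope.

Definition perfect_field (K : fieldType) : Prop :=
  forall p : nat, p \in [pchar K] -> forall x : K, exists y : K, y ^+ p = x.

Definition is_alg_closure (K : fieldType) (Kbar : closedFieldType)
  (iota : {rmorphism K -> Kbar}) : Prop :=
  forall z : Kbar, exists p : {poly K}, p != 0 /\ root (map_poly iota p) z.

Definition is_emb (K : fieldType) (Kbar : closedFieldType)
  (iota : {rmorphism K -> Kbar}) (k : {pred K}) (lam : K -> Kbar) : Prop :=
  (exists f : {rmorphism K -> Kbar}, f =1 lam) /\
  (forall c x, c \in k -> lam (c * x) = iota c * lam x).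

Definition in_Galois (K : fieldType) (Kbar : closedFieldType)
  (iota : {rmorphism K -> Kbar}) (s : Kbar -> Kbar) : Prop :=
  (exists f : {rmorphism Kbar -> Kbar}, f =1 s) /\ bijective s /\
  (forall x : K, s (iota x) = iota x).

Definition in_orbit (K : fieldType) (Kbar : closedFieldType)
  (iota : {rmorphism K -> Kbar}) (lam mu : K -> Kbar) : Prop :=
  exists s : Kbar -> Kbar, in_Galois iota s /\ mu =1 s \o lam.

(* |lam^G| = n (functions identified up to extensional equality) *)
Definition orbit_card (K : fieldType) (Kbar : closedFieldType)
  (iota : {rmorphism K -> Kbar}) (lam : K -> Kbar) (n : nat) : Prop :=
  exists e : 'I_n -> (K -> Kbar),
    (forall i, in_orbit iota lam (e i)) /\
    (forall i j, e i =1 e j -> i = j) /\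
    (forall mu, in_orbit iota lam mu -> exists i, mu =1 e i).

(* z lies in the composite K(lam) of iota(K) and lam(K) inside Kbar:
   the smallest subfield of Kbar containing both. *)
Definition in_composite (K : fieldType) (Kbar : closedFieldType)
  (iota : {rmorphism K -> Kbar}) (lam : K -> Kbar) (z : Kbar) : Prop :=
  forall S : {pred Kbar}, divring_closed S ->
    (forall y, iota y \in S) -> (forall y, lam y \in S) -> z \in S.

Definition is_basis_composite (K : fieldType) (Kbar : closedFieldType)
  (iota : {rmorphism K -> Kbar}) (lam : K -> Kbar) (n : nat)
  (alpha : 'I_n -> Kbar) : Prop :=
  (forall i, in_composite iota lam (alpha i)) /\
  (forall c : 'I_n -> K, \sum_i iota (c i) * alpha i = 0 -> forall i, c i = 0) /\
  (forall z, in_composite iota lam z ->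
     exists c : 'I_n -> K, z = \sum_i iota (c i) * alpha i).

Definition phi_mx (K : fieldType) (n : nat) (beta : 'I_n -> 'I_n -> 'I_n -> K)
  (lamc : 'I_n -> K -> K) (x : K) : 'M[K]_n :=
  \matrix_(i < n, j < n) \sum_(k < n) beta j k i * lamc k x.

(* Isomorphism of two-sided vector spaces K^n_A ~= K^n_B: a bijective
   additive map of row vectors commuting with the left scalar action and the
   right actions v . x = v *m A x, resp. v *m B x. *)
Definition twosided_iso (K : fieldType) (n : nat) (A B : K -> 'M[K]_n) : Prop :=
  exists f : 'rV[K]_n -> 'rV[K]_n,
    bijective f /\
    (forall u v, f (u + v) = f u + f v) /\
    (forall (a : K) v, f (a *: v) = a *: f v) /\
    (forall x v, f (v *m A x) = f v *m B x).

From HB Require Import structures.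
From mathcomp Require Import all_boot all_order all_algebra.
Import GRing.Theory.
Local Open Scope ring_scope.

Set Implicit Arguments.
Unset Strict Implicit.

(* Let alpha be a basis of the field K(lam) over K with structure constants
   beta.  The matrix phi(x) is the matrix of multiplication by lam(x) in this
   basis, so phi(x)^T is the matrix of the same map with respect to the
   bilinear form B(u, v) = (alpha_0-coordinate of u v).  This form is
   symmetric because K(lam) is commutative, and nondegenerate because K(lam)
   is a field: if u <> 0 then B(u, u^-1 alpha_0) = 1.  Hence its Gram matrix
   B satisfies B phi(x) = phi(x)^T B, and v |-> v B^-1 is the isomorphism. *)

Lemma twosided_iso_conj (K : fieldType) (n : nat) (A C : K -> 'M[K]_n)
    (B : 'M[K]_n) :
  B \in unitmx -> (forall x, B *m A x = C x *m B) -> twosided_iso A C.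
Proof.
move=> Bu BA; exists (mulmx^~ (invmx B)); split.
  by exists (mulmx^~ B) => v; rewrite ?mulmxKV ?mulmxK.
split=> [u v|]; first by rewrite mulmxDl.
split=> [a v|x v]; first by rewrite scalemxAl.
rewrite -!mulmxA; congr (v *m _).
by apply: (canRL (mulKmx Bu)); rewrite mulmxA BA mulmxK.
Qed.

Section StructureConstants.
Variables (K L : fieldType) (iota : {rmorphism K -> L}) (n : nat).
Variables (alpha : 'I_n -> L) (beta : 'I_n -> 'I_n -> 'I_n -> K).

Definition comb (c : 'I_n -> K) : L := \sum_i iota (c i) * alpha i.

Definition mul_mx (c : 'I_n -> K) : 'M[K]_n :=
  \matrix_(i < n, j < n) \sum_(k < n) beta j k i * c k.

Definition form_mx (r : 'I_n) : 'M[K]_n := \matrix_(i < n, l < n) beta i l r.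

Hypothesis alpha_free :
  forall c : 'I_n -> K, comb c = 0 -> forall i, c i = 0.
Hypothesis alpha_mul :
  forall i j, alpha i * alpha j = \sum_k iota (beta i j k) * alpha k.

Lemma comb_inj (c d : 'I_n -> K) : comb c = comb d -> c =1 d.
Proof.
move=> cd i; apply/eqP; rewrite -subr_eq0; apply/eqP.
apply: (@alpha_free (fun i => c i - d i)).
rewrite /comb; under eq_bigr => j _ do rewrite rmorphB mulrBl.
by rewrite sumrB -/(comb c) -/(comb d) cd subrr.
Qed.

Lemma comb_delta (r : 'I_n) : comb (fun m => (m == r)%:R) = alpha r.
Proof.
rewrite /comb (bigD1 r) //= eqxx rmorph1 mul1r big1 ?addr0 // => m /negPf->.
by rewrite rmorph0 mul0r.
Qed.

Lemma sumr_comb (c : 'I_n -> K) (e : 'I_n -> 'I_n -> K) :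
  \sum_i iota (c i) * comb (e i) = comb (fun m => \sum_i c i * e i m).
Proof.
under eq_bigr => i _ do rewrite /comb mulr_sumr.
rewrite exchange_big /=; apply: eq_bigr => m _.
rewrite rmorph_sum mulr_suml; apply: eq_bigr => i _.
by rewrite rmorphM mulrA.
Qed.

Lemma mul_alpha_comb (i : 'I_n) (c : 'I_n -> K) :
  alpha i * comb c = comb (fun m => \sum_l c l * beta i l m).
Proof.
rewrite -sumr_comb /comb mulr_sumr; apply: eq_bigr => l _.
by rewrite mulrCA alpha_mul.
Qed.

Lemma mul_comb (c d : 'I_n -> K) :
  comb c * comb d = comb (fun m => \sum_i c i * \sum_l d l * beta i l m).
Proof.
rewrite -sumr_comb {1}/comb mulr_suml; apply: eq_bigr => i _.
by rewrite -mulrA mul_alpha_comb.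
Qed.

Lemma beta_sym (i l m : 'I_n) : beta i l m = beta l i m.
Proof. by apply: comb_inj; rewrite /comb -!alpha_mul mulrC. Qed.

Lemma mul_alpha_mul_mx (j : 'I_n) (c : 'I_n -> K) :
  alpha j * comb c = comb (fun l => mul_mx c l j).
Proof.
rewrite mul_alpha_comb /comb; apply: eq_bigr => l _; rewrite mxE.
by congr (iota _ * _); apply: eq_bigr => k _; rewrite mulrC.
Qed.

Lemma form_mx_mul_mx (r : 'I_n) (c : 'I_n -> K) :
  form_mx r *m mul_mx c = (mul_mx c)^T *m form_mx r.
Proof.
apply/matrixP => i j; rewrite !mxE.
have := mulrCA (alpha i) (alpha j) (comb c).
rewrite [alpha j * comb c]mul_alpha_mul_mx [alpha i * comb c]mul_alpha_mul_mx.
rewrite !mul_alpha_comb => /comb_inj/(_ r) e.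
rewrite (eq_bigr (fun l => mul_mx c l j * beta i l r)) => [|l _].
  by rewrite e; apply: eq_bigr => l _; rewrite !mxE beta_sym.
by rewrite mxE mulrC.
Qed.

Lemma form_mx_unit (r : 'I_n) :
  (forall c, exists d, (comb c)^-1 = comb d) -> form_mx r \in unitmx.
Proof.
move=> span_inv; rewrite unitmxE unitfE; apply/det0P => -[v v_neq0 vB0].
pose c i := v ord0 i.
have c_neq0 : comb c != 0.
  apply: contra_neq v_neq0 => c0; apply/rowP => i; rewrite mxE.
  exact: alpha_free c0 i.
have vB0_l l : \sum_i c i * beta l i r = 0.
  have := congr1 (fun M : 'rV[K]_n => M ord0 l) vB0; rewrite !mxE => vl.
  by rewrite -[RHS]vl; apply: eq_bigr => i _; rewrite mxE beta_sym.
have [d dE] := span_inv c.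
have [e eE] : exists e, comb e = comb d * alpha r.
  by rewrite -comb_delta mul_comb; eexists.
have := mulVKf c_neq0 (alpha r).
rewrite dE -eE mulrC mul_comb -comb_delta => /comb_inj/(_ r).
rewrite eqxx big1 => [/eqP|i _]; first by rewrite eq_sym oner_eq0.
by rewrite vB0_l mulr0.
Qed.

End StructureConstants.

Section Composite.
Variables (K : fieldType) (L : closedFieldType).
Variables (iota : {rmorphism K -> L}) (lam : K -> L).

Lemma in_compositeP (z : L) :
  in_composite iota lam z <->
  forall S : divringClosed L,
    (forall y, iota y \in S) -> (forall y, lam y \in S) -> z \in S.
Proof.
split=> [zS S | zS S S_closed]; first exact: zS (divringClosedP S).
exact: zS (HB.pack S (GRing.isDivringClosed.Build L S S_closed)).
Qed.

Lemma in_composite1 : in_composite iota lam 1.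
Proof. by apply/in_compositeP => S _ _; rewrite rpred1. Qed.

Lemma in_compositeV (z : L) :
  in_composite iota lam z -> in_composite iota lam z^-1.
Proof.
by move/in_compositeP=> zS; apply/in_compositeP => S Si Sl; rewrite rpredV zS.
Qed.

Lemma in_composite_comb (n : nat) (alpha : 'I_n -> L) (c : 'I_n -> K) :
  (forall i, in_composite iota lam (alpha i)) ->
  in_composite iota lam (comb iota alpha c).
Proof.
move=> alpha_in; apply/in_compositeP => S Si Sl.
apply: rpred_sum => i _; rewrite rpredM //.
by have /in_compositeP := alpha_in i; apply.
Qed.

End Composite.

Theorem lemma2p2 (K : fieldType) (k : {pred K}) (Kbar : closedFieldType)
  (iota : {rmorphism K -> Kbar}) (lam : K -> Kbar) (n : nat)
  (alpha : 'I_n -> Kbar) (lamc : 'I_n -> K -> K)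
  (beta : 'I_n -> 'I_n -> 'I_n -> K) :
  perfect_field K ->
  divring_closed k ->
  is_alg_closure iota ->
  is_emb iota k lam ->
  orbit_card iota lam n ->
  is_basis_composite iota lam alpha ->
  (forall x : K, lam x = \sum_i iota (lamc i x) * alpha i) ->
  (forall i j, alpha i * alpha j = \sum_k iota (beta i j k) * alpha k) ->
  twosided_iso (phi_mx beta lamc) (fun x => (phi_mx beta lamc x)^T).
Proof.
move=> _ _ _ _ _ [alpha_in [alpha_free alpha_span]] _ alpha_mul.
have span_inv c : exists d, (comb iota alpha c)^-1 = comb iota alpha d.
  exact/alpha_span/in_compositeV/in_composite_comb.
case: n alpha lamc beta alpha_in alpha_free alpha_span alpha_mul span_inv
  => [|n] alpha lamc beta _ alpha_free alpha_span alpha_mul span_inv.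
  have [c] := alpha_span 1 (@in_composite1 _ _ iota lam).
  by rewrite big_ord0 => /eqP; rewrite oner_eq0.
apply: (twosided_iso_conj (form_mx_unit alpha_free alpha_mul ord0 span_inv)).
move=> x; exact: form_mx_mul_mx alpha_free alpha_mul ord0 (lamc^~ x).
Qed.
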